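(* Let $\Gamma\in\mathcal S$ with embedding $\varphi$ into $\mathbb Z^n$. If some vertex $v$ satisfies $\varphi(v)=-2E_{i_v}-\sum_{j\in J_v}E_j$ (with $i_v\notin J_v$), then every other vertex $w\ne v$ satisfies $\varphi(w)=E_{i_w}-\sum_{j\in J_w}E_j$ for some index $i_w\notin J_w$.
   Context: A plumbing tree is a finite tree $\Gamma$ each of whose vertices $v$ carries an integer decoration $d(v)$. $\Gamma$ is minimal if no vertex has decoration $-1$. For $n\ge 1$ let $(\mathbb Z^n,Q_n)$ be the lattice with basis $E_1,\dots,E_n$ and $Q_n(E_i,E_j)=-\delta_{ij}$, and let $K=\sum_{i=1}^n E_i$. A plumbing tree $\Gamma$ on $n$ vertices is a symplectic plumbing tree if there is a map $\varphi$ (an embedding) from its vertex set to $\mathbb Z^n$ such that: for distinct vertices $v_1,v_2$, $Q_n(\varphi(v_1),\varphi(v_2))$ is $1$ if they are adjacent and $0$ otherwise; $Q_n(\varphi(v),\varphi(v))=d(v)$ for every $v$; and $Q_n(\varphi(v),K)+Q_n(\varphi(v),\varphi(v))=-2$ for every $v$. $\mathcal S$ is the set of minimal, connected symplectic plumbing trees. *)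

From HB Require Import structures.
From mathcomp Require Import all_boot all_order all_algebra.
Set Implicit Arguments. Unset Strict Implicit. Unset Printing Implicit Defensive.
Import Order.TTheory GRing.Theory Num.Theory.
Local Open Scope ring_scope.

Notation vecZ n := {ffun 'I_n -> int}.

Definition basisE (n : nat) (i : 'I_n) : vecZ n := [ffun k => (k == i)%:R].

(* Q_n(x, y) = - sum_k x_k y_k, so that Q_n(E_i, E_j) = - delta_ij *)
Definition Qn (n : nat) (x y : vecZ n) : int := - \sum_(k < n) x k * y k.

Definition Kvec (n : nat) : vecZ n := \sum_(i < n) basisE i.

(* A plumbing graph on vertex set 'I_n: adjacency relation [adj] and
   decorations [d]. *)
Definition simple_graph (n : nat) (adj : rel 'I_n) : Prop :=
  irreflexive adj /\ symmetric adj.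

Definition num_edges (n : nat) (adj : rel 'I_n) : nat :=
  #|[set p : 'I_n * 'I_n | adj p.1 p.2 && (p.1 < p.2)%N]|.

Definition is_tree (n : nat) (adj : rel 'I_n) : Prop :=
  (0 < n)%N /\ simple_graph adj /\ (forall u v, connect adj u v) /\
  num_edges adj = n.-1.

Definition minimal_dec (n : nat) (d : 'I_n -> int) : Prop :=
  forall v, d v != -1.

Definition is_embedding (n : nat) (adj : rel 'I_n) (d : 'I_n -> int)
    (phi : 'I_n -> vecZ n) : Prop :=
  (forall v1 v2, v1 != v2 ->
      Qn (phi v1) (phi v2) = (if adj v1 v2 then 1 else 0)) /\
  (forall v, Qn (phi v) (phi v) = d v) /\
  (forall v, Qn (phi v) (Kvec n) + Qn (phi v) (phi v) = -2).

(* Membership in S (minimal connected symplectic plumbing tree),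
   witnessed by the given embedding phi. *)
Definition in_S_with (n : nat) (adj : rel 'I_n) (d : 'I_n -> int)
    (phi : 'I_n -> vecZ n) : Prop :=
  is_tree adj /\ minimal_dec d /\ is_embedding adj d phi.

(* Write [pronic x] for the sum of the pronic numbers [x_c (x_c + 1)]; the
   adjunction condition says [pronic (phi u) = 2], so each [phi u] has one
   coordinate in [{1, -2}] and all others in [{0, -1}]. If [phi v i = -2], the
   nonnegative pairings [Qn (phi u) (phi v)] force [phi u i] into [{0, 1}] for
   [u <> v]. A second vertex [w] with [phi w k = -2] would have [k <> i]; along a
   shortest walk from the vertices with nonzero [i]-th coordinate to those with
   nonzero [k]-th coordinate consecutive vectors pair to 1 and the others to 0,
   so their sum [s] still has [pronic s = 2], whereas [s i] and [s k] both lie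
   in [{1, -2}] and contribute 4. *)

From mathcomp Require Import all_boot all_order all_algebra.
From mathcomp Require Import zify.
From Stdlib Require Import Classical.
Import Order.TTheory GRing.Theory Num.Theory.
Set Implicit Arguments. Unset Strict Implicit. Unset Printing Implicit Defensive.

Section ShortestWalk.
Variables (T : finType) (e : rel T) (X Y : pred T).

Definition walk (f : nat -> T) (m : nat) : Prop :=
  [/\ X (f 0), Y (f m) & forall j, j < m -> e (f j) (f j.+1)].

Definition shortest_walk (f : nat -> T) (m : nat) : Prop :=
  walk f m /\ forall g m', walk g m' -> m <= m'.

Lemma connect_walk x y : X x -> Y y -> connect e x y -> exists f m, walk f m.
Proof.
move=> Xx Yy /connectP[p p_path y_last].
exists (nth x (x :: p)), (size p); split=> // [|j jp].
  by rewrite -[size p]/(size (x :: p)).-1 nth_last /= -y_last.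
exact: (pathP x p_path).
Qed.

Lemma exists_shortest_walk f m : walk f m -> exists g m', shortest_walk g m'.
Proof.
elim/ltn_ind: m f => m IHm f fm.
have [[g [m' [lt_m'm gm']]]|no_shorter] :=
  classic (exists g m', m' < m /\ walk g m').
  exact: IHm gm'.
exists f, m; split=> // g m' gm'; rewrite leqNgt; apply/negP => lt_m'm.
by apply: no_shorter; exists g, m'.
Qed.

Lemma walk_drop f m j : walk f m -> j <= m -> X (f j) ->
  walk (fun t => f (t + j)) (m - j).
Proof.
move=> [_ Yfm f_adj] jm Xfj; split=> // [|t tmj]; first by rewrite subnK.
by rewrite addSn; apply: f_adj; lia.
Qed.

Lemma walk_take f m j : walk f m -> j <= m -> Y (f j) -> walk f j.
Proof. by move=> [Xf0 _ f_adj] jm Yfj; split=> // t tj; apply: f_adj; lia. Qed.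

Lemma walk_splice f m j o : walk f m -> j + o < m -> e (f j) (f (j + o).+1) ->
  walk (fun t => f (if t <= j then t else t + o)) (m - o).
Proof.
move=> [Xf0 Yfm f_adj] jom e_jo; split=> [||t tmo] //=.
  by rewrite ifN ?subnK; lia.
case: (ltngtP t j) => [tj|jt|->].
- by apply: f_adj; lia.
- by rewrite addSn; apply: f_adj; lia.
- by rewrite addSn.
Qed.

Variables (f : nat -> T) (m : nat).
Hypothesis f_shortest : shortest_walk f m.

Lemma shortest_walk_notX j : 0 < j <= m -> ~~ X (f j).
Proof.
case: f_shortest => fm f_min /andP[j_gt0 jm]; apply/negP => Xfj.
by have := f_min _ _ (walk_drop fm jm Xfj); lia.
Qed.

Lemma shortest_walk_notY j : j < m -> ~~ Y (f j).
Proof.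
case: f_shortest => fm f_min jm; apply/negP => Yfj.
by have := f_min _ _ (walk_take fm (ltnW jm) Yfj); lia.
Qed.

Lemma shortest_walk_chordless j l : j.+1 < l <= m -> ~~ e (f j) (f l).
Proof.
case: f_shortest => fm f_min /andP[jl lm]; apply/negP => e_jl.
have jom : j + (l - j).-1 < m by lia.
have jo_l : (j + (l - j).-1).+1 = l by lia.
have e_jo : e (f j) (f (j + (l - j).-1).+1) by rewrite jo_l.
by have := f_min _ _ (walk_splice fm jom e_jo); lia.
Qed.

Lemma shortest_walk_uniq j l : j < l <= m -> f j != f l.
Proof.
case: f_shortest => fm f_min /andP[jl lm]; apply/eqP => fjl.
have [l_lt_m|m_le_l] := ltnP l m.
  have jom : j + (l - j) < m by lia.
  have jo_l : j + (l - j) = l by lia.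
  have e_jo : e (f j) (f (j + (l - j)).+1).
    by rewrite jo_l fjl; case: fm => _ _; apply.
  by have := f_min _ _ (walk_splice fm jom e_jo); lia.
have l_eq_m : l = m by lia.
have Yfj : Y (f j) by case: fm; rewrite fjl l_eq_m.
by have := f_min _ _ (walk_take fm (ltnW (leq_trans jl lm)) Yfj); lia.
Qed.

End ShortestWalk.

Local Open Scope ring_scope.

Section Lattice.
Variable n : nat.
Implicit Types x y z : vecZ n.

Lemma QnC x y : Qn x y = Qn y x.
Proof. by rewrite /Qn; congr (- _); apply: eq_bigr => c _; rewrite mulrC. Qed.

Lemma Qn0l z : Qn 0 z = 0.
Proof. by rewrite /Qn big1 ?oppr0 // => c _; rewrite ffunE mul0r. Qed.

Lemma QnDl x y z : Qn (x + y) z = Qn x z + Qn y z.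
Proof.
rewrite /Qn -opprD -big_split /=; congr (- _); apply: eq_bigr => c _.
by rewrite ffunE mulrDl.
Qed.

Lemma QnDr x y z : Qn z (x + y) = Qn z x + Qn z y.
Proof. by rewrite QnC QnDl !(QnC z). Qed.

Lemma Qn_suml (I : Type) (r : seq I) (P : pred I) (F : I -> vecZ n) z :
  Qn (\sum_(j <- r | P j) F j) z = \sum_(j <- r | P j) Qn (F j) z.
Proof. by elim/big_rec2: _ => [|j a b _ <-]; rewrite ?Qn0l ?QnDl. Qed.

Lemma sum_basisE (J : {set 'I_n}) c : (\sum_(j in J) basisE j) c = (c \in J)%:R.
Proof.
rewrite sum_ffunE; case: (boolP (c \in J)) => [cJ|cNJ].
  rewrite (bigD1 c) //= big1 ?addr0 => [|j /andP[_ jc]]; rewrite ffunE ?eqxx //.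
  by rewrite eq_sym (negbTE jc).
rewrite big1 // => j jJ; rewrite ffunE; case: eqP => // cj.
by rewrite cj jJ in cNJ.
Qed.

Lemma KvecE c : Kvec n c = 1.
Proof.
have -> : Kvec n = \sum_(j in [set: 'I_n]) basisE j.
  by apply: eq_bigl => j; rewrite inE.
by rewrite sum_basisE inE.
Qed.

Definition pronic x : int := \sum_(c < n) x c * (x c + 1).

Lemma Qn_adjunction x : Qn x x + Qn x (Kvec n) = - pronic x.
Proof.
rewrite /Qn /pronic -opprD -big_split /=; congr (- _); apply: eq_bigr => c _.
by rewrite KvecE mulrDr mulr1.
Qed.

Lemma pronicD x y : pronic (x + y) = pronic x + pronic y - 2 * Qn x y.
Proof.
have := Qn_adjunction (x + y); rewrite !QnDl !QnDr (QnC y x).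
have := Qn_adjunction x; have := Qn_adjunction y; lia.
Qed.

Lemma pronic_term_ge0 (a : int) : 0 <= a * (a + 1).
Proof. nia. Qed.

Lemma pronic_term_le2 (a : int) : a * (a + 1) <= 2 ->
  [\/ a = -2, a = -1, a = 0 | a = 1].
Proof.
move=> le2; have : -2 <= a <= 1 by nia.
by clear le2; case: a => [[|[|[|k]]]|[|[|k]]] //= _; constructor.
Qed.

Lemma pronic_ge_term x c : x c * (x c + 1) <= pronic x.
Proof.
rewrite /pronic (bigD1 c) //= lerDl.
by apply: sumr_ge0 => e _; apply: pronic_term_ge0.
Qed.

Lemma pronic_ge_two_terms x c c' : c != c' ->
  x c * (x c + 1) + x c' * (x c' + 1) <= pronic x.
Proof.
move=> cc'; rewrite /pronic (bigD1 c) //= lerD2l (bigD1 c') 1?eq_sym //= lerDl.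
by apply: sumr_ge0 => e _; apply: pronic_term_ge0.
Qed.

Lemma pronic_eq2 x : pronic x = 2 ->
  exists c, (x c = 1 \/ x c = -2) /\ forall c', c' != c -> x c' = 0 \/ x c' = -1.
Proof.
move=> px2.
have [c /= nz_c|all0] := pickP (fun c => x c * (x c + 1) != 0); last first.
  by move: px2; rewrite /pronic big1 // => c _; apply/eqP/negbFE/all0.
have := pronic_ge_term x c; rewrite px2 => le_c.
have x_c : x c = 1 \/ x c = -2.
  by move: nz_c; case/pronic_term_le2: le_c => ->; auto.
exists c; split=> // c' c'c.
have := pronic_ge_two_terms x c'c; rewrite px2 => two_terms.
have le0 : x c' * (x c' + 1) <= 0 by case: x_c two_terms => ->; lia.
have le2 : x c' * (x c' + 1) <= 2 by apply: le_trans le0 _.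
by move: le0; case/pronic_term_le2: le2 => ->; auto.
Qed.

(* [pronic (x + y) = 4 - 2 Qn x y <= 4] bounds the term [(x i - 2) (x i - 1)]. *)
Lemma coord_of_nonneg_pairing x y i : pronic x = 2 -> pronic y = 2 ->
  0 <= Qn x y -> y i = -2 -> x i = 0 \/ x i = 1.
Proof.
move=> px2 py2 Qxy yi.
have := pronic_ge_term (x + y) i; rewrite pronicD px2 py2 !ffunE yi.
have := pronic_ge_term x i; rewrite px2.
by case/pronic_term_le2=> ->; rewrite ?eqxx; auto; lia.
Qed.

Lemma pronic_sum_chain (x : nat -> vecZ n) m :
  (forall j, (j <= m)%N -> pronic (x j) = 2) ->
  (forall j, (j < m)%N -> Qn (x j) (x j.+1) = 1) ->
  (forall j l, (j.+1 < l <= m)%N -> Qn (x j) (x l) = 0) ->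
  pronic (\sum_(j < m.+1) x j) = 2.
Proof.
move=> px2 Qnext Qfar; elim: m => [|m IHm] in px2 Qnext Qfar *.
  by rewrite big_ord1 px2.
rewrite big_ord_recr /= pronicD IHm => [|j jm|j jm|j l jlm]; first last.
- by apply: Qfar; lia.
- by apply: Qnext; apply: ltnW.
- by apply: px2; apply: leqW.
rewrite px2 // Qn_suml big_ord_recr /= Qnext // big1 ?add0r // => j _.
by apply: Qfar; have := ltn_ord j; lia.
Qed.

Lemma eq_basis_sub_sum x c : x c = 1 ->
    (forall c', c' != c -> x c' = 0 \/ x c' = -1) ->
  x = basisE c - \sum_(j in [set j | x j == -1]) basisE j.
Proof.
move=> xc others; apply/ffunP => c'; rewrite !ffunE sum_basisE inE.
have [->|c'c] := eqVneq c' c; first by rewrite xc.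
by case: (others c' c'c) => ->.
Qed.

End Lattice.

Section UniqueMinusTwo.
Variables (n : nat) (adj : rel 'I_n) (phi : 'I_n -> vecZ n).
Hypothesis adj_connected : forall u w, connect adj u w.
Hypothesis Qn_phi_offdiag : forall u u', u != u' ->
  Qn (phi u) (phi u') = (if adj u u' then 1 else 0).
Hypothesis pronic_phi : forall u, pronic (phi u) = 2.

Lemma coord_phi_01 v i u : phi v i = -2 -> u != v ->
  phi u i = 0 \/ phi u i = 1.
Proof.
move=> phi_v_i uv; apply: coord_of_nonneg_pairing phi_v_i => //.
by rewrite Qn_phi_offdiag //; case: adj.
Qed.

Lemma coord_phi_nonzero v i u : phi v i = -2 -> phi u i != 0 ->
  phi u i * (phi u i + 1) = 2.
Proof.
move=> phi_v_i; have [-> _|uv] := eqVneq u v; first by rewrite phi_v_i.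
by case: (coord_phi_01 phi_v_i uv) => ->.
Qed.

Lemma pronic_sum_shortest_walk X Y f m : shortest_walk adj X Y f m ->
  pronic (\sum_(j < m.+1) phi (f j)) = 2.
Proof.
move=> f_shortest; have [[_ _ f_adj] _] := f_shortest.
apply: (@pronic_sum_chain _ (fun j => phi (f j))) => [j _|j jm|j l jlm] /=.
- exact: pronic_phi.
- by rewrite Qn_phi_offdiag ?f_adj ?(shortest_walk_uniq f_shortest) ?ltnSn.
have j_lt_l : (j < l <= m)%N by case/andP: jlm => /ltnW ->.
by rewrite Qn_phi_offdiag ?(shortest_walk_uniq f_shortest) //
  (negbTE (shortest_walk_chordless f_shortest jlm)).
Qed.

Lemma minus_two_coord_unique v w i k : phi v i = -2 -> phi w k = -2 -> v = w.
Proof.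
move=> phi_v_i phi_w_k; have [->//|wv] := eqVneq w v; exfalso.
have ik : i != k.
  apply/eqP => ik; move: phi_w_k; rewrite -ik => phi_w_i.
  by case: (coord_phi_01 phi_v_i wv); rewrite phi_w_i.
pose X := [pred u | phi u i != 0]; pose Y := [pred u | phi u k != 0].
have Xv : X v by rewrite /= phi_v_i.
have Yw : Y w by rewrite /= phi_w_k.
have [f [m fm]] := connect_walk Xv Yw (adj_connected v w).
have [g [m' g_shortest]] := exists_shortest_walk fm.
have [[Xg0 Ygm _] _] := g_shortest.
set s := \sum_(j < m'.+1) phi (g j).
have s_i : s i = phi (g 0) i.
  rewrite /s sum_ffunE big_ord_recl /= big1 ?addr0 // => j _.
  by apply/eqP/negbNE/(shortest_walk_notX g_shortest); rewrite /= ltn_ord.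
have s_k : s k = phi (g m') k.
  rewrite /s sum_ffunE big_ord_recr /= big1 ?add0r // => j _.
  exact/eqP/negbNE/(shortest_walk_notY g_shortest).
have := pronic_ge_two_terms s ik.
rewrite (pronic_sum_shortest_walk g_shortest) s_i s_k.
by rewrite (coord_phi_nonzero phi_v_i Xg0) (coord_phi_nonzero phi_w_k Ygm).
Qed.

End UniqueMinusTwo.

Theorem proposition3p4 (n : nat) (adj : rel 'I_n) (d : 'I_n -> int)
    (phi : 'I_n -> vecZ n) :
  in_S_with adj d phi ->
  forall v : 'I_n,
    (exists (i : 'I_n) (J : {set 'I_n}), i \notin J /\
       phi v = - (basisE i *+ 2) - \sum_(j in J) basisE j) ->
    forall w : 'I_n, w != v ->
      exists (i : 'I_n) (J : {set 'I_n}), i \notin J /\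
        phi w = basisE i - \sum_(j in J) basisE j.
Proof.
move=> [[_ [_ [adj_connected _]]] [_ [Qn_offdiag [_ adjunction]]]].
move=> v [i [J [iNJ phi_v]]] w wv.
have pronic_phi u : pronic (phi u) = 2.
  by have := adjunction u; rewrite addrC Qn_adjunction; lia.
have phi_v_i : phi v i = -2.
  by rewrite phi_v !ffunE sum_basisE (negbTE iNJ) eqxx.
have [c [phi_w_c others]] := pronic_eq2 (pronic_phi w).
have {}phi_w_c : phi w c = 1.
  case: phi_w_c => [//|phi_w_c]; case/negP: wv; apply/eqP.
  exact: (minus_two_coord_unique adj_connected Qn_offdiag pronic_phi phi_w_c phi_v_i).
exists c, [set j | phi w j == -1]; split; first by rewrite inE phi_w_c.
exact: eq_basis_sub_sum.
Qed.
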